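(* Let $a\in\mathbb{N}$ and $b,d\in\mathbb{Z}$. Suppose there is a prime $p$ with $v_p(a)>\max\{v_p(b),v_p(d)\}$ and $v_p(b)=v_p(d)$. Then there exists a completely multiplicative function $f:\mathbb{N}\to\mathbb{S}^1$ such that $$\liminf_{n\to\infty}|f(an+b)-f(an+d)|>0.$$
   Context: $\mathbb{N}=\{1,2,\dots\}$, $\mathbb{S}^1$ the unit circle; completely multiplicative means $f(mn)=f(m)f(n)$. $v_p$ is the $p$-adic valuation. The expression is considered for $n$ large enough that $an+b,an+d\ge1$. *)

From HB Require Import structures.
From mathcomp Require Import all_boot all_order all_algebra.
From mathcomp Require Import all_classical all_reals all_analysis.
From mathcomp Require Export complex.
Set Implicit Arguments. Unset Strict Implicit. Unset Printing Implicit Defensive.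
Import Order.TTheory GRing.Theory Num.Theory.

Definition unimodular_cm (R : realType) (f : nat -> R[i]) : Prop :=
  (forall n : nat, (0 < n)%N -> Normc.normc (f n) = 1%R) /\
  (forall m n : nat, (0 < m)%N -> (0 < n)%N -> f (m * n)%N = (f m * f n)%R).

(* f evaluated at an integer argument z (meaningful for z >= 1, which holds
   eventually for the arguments a n + b, a n + d used below). *)
Definition fZ (R : realType) (f : nat -> R[i]) (z : int) : R[i] := f `|z|%N.

From HB Require Import structures.
From mathcomp Require Import all_boot all_order all_algebra.
From mathcomp Require Import all_classical all_reals all_analysis.
From mathcomp Require Import complex.
From mathcomp Require Import fingroup cyclic separable cyclotomic.
From mathcomp.algebra_tactics Require Import ring.
From mathcomp Require Import zify.
Import Order.TTheory GRing.Theory Num.Theory.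
Set Implicit Arguments. Unset Strict Implicit. Unset Printing Implicit Defensive.

(* Write a = A p^k, b = B p^k, d = D p^k with k = v_p(b) = v_p(d), p | A and
   p coprime to B, D.  For large n the p'-parts of a n + b and a n + d are
   x = A n + B and y = A n + D: integers prime to p with fixed difference
   c = D - B <> 0.  So it suffices to find a homomorphism phi from the integers
   prime to p into Z/N with phi x <> phi y whenever y - x = c; then
   f m = w ^ phi(m_p') with w a primitive N-th root of unity works, the
   liminf being bounded below by the minimal distance between distinct N-th
   roots of unity.  If p does not divide c, then x <> y mod p and phi is a
   discrete logarithm mod p.  If p^e || c with e > 0, phi is the Fermat
   quotient (u^M - 1) / p^e mod p^e with M = totient (p^e): by the binomial
   formula y^M - x^M = M x^(M-1) c mod p^(2e), which has valuation exactly
   2e - 1, so the quotients of x and y differ mod p^e. *)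

Lemma int_pfactor_coprime p (c : int) : prime p -> c != 0%R ->
  exists2 c' : int, ~~ (p %| `|c'|) & c = (c' * (p ^ logn p `|c|)%:Z)%R.
Proof.
move=> p_pr c0; have c_gt0 : 0 < `|c| by rewrite absz_gt0.
have [m pm Dc] := pfactor_coprime p_pr c_gt0.
exists (sgz c * m%:Z)%R.
  by rewrite abszM absz_nat -sgrz absz_sg c0 mul1n -prime_coprime.
by rewrite -mulrA -PoszM -Dc -intEsg.
Qed.

Lemma partn_p'X p x k : prime p -> coprime p x -> (x * p ^ k)`_p^' = x.
Proof.
move=> p_pr px; have x_gt0 : 0 < x.
  by move: px; rewrite prime_coprime // lt0n; apply: contra => /eqP->; apply: dvdn0.
rewrite (partnM _ x_gt0) ?expn_gt0 ?prime_gt0 // part_pnat_id; last first.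
  by rewrite p'natE // -prime_coprime.
by rewrite part_p'nat ?muln1 // pnatNK pnatX pnat_id.
Qed.

Lemma coprime_partn_p' p m : prime p -> coprime p m`_p^'.
Proof. by move=> p_pr; rewrite coprime_sym (p'nat_coprime (part_pnat _ _)) ?pnat_id. Qed.

Definition log_mod (p N : nat) (phi : nat -> nat) :=
  forall u v, coprime p u -> coprime p v -> phi (u * v) = phi u + phi v %[mod N].

Definition separates_shift (p N : nat) (c : int) (phi : nat -> nat) :=
  forall x y : nat, coprime p x -> coprime p y -> (y%:Z - x%:Z)%R = c ->
  phi x != phi y %[mod N].

Lemma natr_Zp_eqmod p (m n : nat) : 1 < p ->
  (m%:R = n%:R :> 'Z_p)%R <-> m = n %[mod p].
Proof.
move=> p_gt1; split => [/(congr1 (@nat_of_ord _))|Emn]; first by rewrite !val_Zp_nat.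
by apply: val_inj; rewrite /= !val_Zp_nat.
Qed.

Lemma prime_primitive_root p : prime p -> exists g : nat,
  (forall u, coprime p u -> exists j, g ^ j = u %[mod p]) /\
  (forall i j, (g ^ i == g ^ j %[mod p]) = (i == j %[mod p.-1])).
Proof.
move=> p_pr; have p_gt1 := prime_gt1 p_pr.
have /cyclicP [G DG] := units_Zp_cyclic p_pr.
have oG : #[G]%g = p.-1.
  by rewrite /order -DG card_units_Zp ?totient_prime ?prime_gt0.
pose g : nat := val (FinRing.uval G).
have gX j : ((g ^ j)%:R : 'Z_p)%R = FinRing.uval (G ^+ j)%g.
  by rewrite FinRing.val_unitX natrX natr_Zp.
exists g; split => [u pu | i j].
  have Uu : ((u%:R : 'Z_p) \is a GRing.unit)%R by rewrite unitZpE.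
  have : FinRing.unit _ Uu \in <[G]>%g by rewrite -DG inE.
  case/cycleP=> j Dj; exists j; apply/(natr_Zp_eqmod _ _ p_gt1).
  by rewrite gX -Dj.
rewrite -oG -eq_expg_mod_order.
apply/idP/idP => [/eqP/(natr_Zp_eqmod _ _ p_gt1)|/eqP Eij].
  by rewrite !gX => Eij; apply/eqP/val_inj.
by apply/eqP/(natr_Zp_eqmod _ _ p_gt1); rewrite !gX Eij.
Qed.

Lemma discrete_log_separates p (c : int) : prime p -> ~~ (p%:Z %| c)%Z ->
  exists phi, log_mod p p.-1 phi /\ separates_shift p p.-1 c phi.
Proof.
move=> p_pr pNc; have [g [g_onto g_inj]] := prime_primitive_root p_pr.
have /choice[phi Dphi] : forall u, exists j, coprime p u -> g ^ j = u %[mod p].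
  by move=> u; have [/g_onto[j]|] := boolP (coprime p u); [exists j | exists 0].
exists phi; split => [u v pu pv | x y px py Dc].
  apply/eqP; rewrite -g_inj expnD -modnMm !Dphi ?coprimeMr ?pu ?pv //.
  by rewrite modnMm.
rewrite -g_inj !Dphi //; apply: contra pNc => /eqP Exy.
by rewrite -Dc -eqz_mod_dvd !modz_nat Exy.
Qed.

Lemma exprSD_sqr (R : comPzRingType) (x h : R) n :
  exists q, ((x + h) ^+ n.+1 = x ^+ n.+1 + n.+1%:R * x ^+ n * h + h ^+ 2 * q)%R.
Proof.
elim: n => [|n [q Dq]]; first by exists 0%R; rewrite mulr0 addr0 mulr1 mul1r.
exists (x * q + n.+1%:R * x ^+ n + h * q)%R.
by rewrite exprS Dq !exprS -[n.+2]addn1 -[n.+1]addn1 !natrD; ring.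
Qed.

Definition fermat_quotient (p e u : nat) := u ^ totient (p ^ e) %/ p ^ e.

Section FermatQuotient.

Variables p e : nat.
Hypotheses (p_pr : prime p) (e_gt0 : 0 < e).
Local Notation N := (p ^ e).
Local Notation M := (totient (p ^ e)).
Local Notation fq := (fermat_quotient p e).

Let N_gt1 : 1 < N.
Proof. by rewrite -{1}(expn0 p) ltn_exp2l ?prime_gt1. Qed.

Lemma fermat_quotientE u : coprime p u -> u ^ M = fq u * N + 1.
Proof.
move=> pu; rewrite {1}(divn_eq (u ^ M) N) Euler_exp_totient ?modn_small //.
by rewrite coprime_sym coprimeXl.
Qed.

Lemma fermat_quotientM u v : coprime p u -> coprime p v ->
  fq (u * v) = fq u + fq v %[mod N].
Proof.
move=> pu pv; have N_gt0 := ltnW N_gt1.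
have -> : fq (u * v) = fq u * fq v * N + (fq u + fq v).
  rewrite [fq (u * v)]/fermat_quotient expnMn !fermat_quotientE //.
  have -> : (fq u * N + 1) * (fq v * N + 1) =
            (fq u * fq v * N + (fq u + fq v)) * N + 1 by ring.
  by rewrite divnMDl // divn_small // addn0.
by rewrite modnMDl.
Qed.

Local Open Scope ring_scope.

Lemma fermat_quotient_shift x y (c : int) : coprime p x -> coprime p y ->
  ~~ (p %| `|c|)%N -> y%:Z = x%:Z + c * N%:Z -> (fq x != fq y %[mod N])%N.
Proof.
move=> px py pc Dy; apply/negP => /eqP eq_fq.
have [M' DM] : exists M', M = M'.+1 by exists M.-1; rewrite prednK // totient_gt0 ltnW.
have [q Dq] := exprSD_sqr x%:Z (c * N%:Z) M'.
have fqE : ((fq y)%:Z - (fq x)%:Z) * N%:Z = y%:Z ^+ M - x%:Z ^+ M.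
  by rewrite -!natz -!natrX !fermat_quotientE // !natrD !natrM; ring.
have N2_dvd : (N%:Z * N%:Z %| M%:Z * x%:Z ^+ M' * c * N%:Z)%Z.
  have : (N%:Z * N%:Z %| y%:Z ^+ M - x%:Z ^+ M)%Z.
    by rewrite -fqE dvdz_mul // -eqz_mod_dvd !modz_nat eq_fq.
  have -> : y%:Z ^+ M - x%:Z ^+ M =
            M%:Z * x%:Z ^+ M' * c * N%:Z + (c * N%:Z) ^+ 2 * q.
    by rewrite Dy DM Dq natz; ring.
  by rewrite rpredDr // dvdz_mulr // exprMn dvdz_mull // expr2 dvdzz.
have : (p%:Z %| p.-1%:Z * x%:Z ^+ M' * c)%Z.
  have N0 : N%:Z != 0 by rewrite -lt0n expn_gt0 prime_gt0.
  have pe0 : (p ^ e.-1)%:Z != 0 by rewrite -lt0n expn_gt0 prime_gt0.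
  move: N2_dvd; rewrite dvdz_mul2r // totient_pfactor //.
  rewrite {1}(_ : N = p ^ e.-1 * p)%N; last by rewrite -expnSr prednK.
  rewrite !PoszM (_ : _ * _ * c = (p ^ e.-1)%:Z * (p.-1%:Z * x%:Z ^+ M' * c));
    last by ring.
  by rewrite dvdz_mul2l.
have /negbTE pNx : ~~ (p %| x)%N by rewrite -prime_coprime.
rewrite dvdzE !abszM !absz_nat abszX !Euclid_dvdM // Euclid_dvdX // pNx (negbTE pc).
rewrite /= !orbF.
by apply/negP; rewrite -prime_coprime // coprime_sym coprimePn ?prime_gt0.
Qed.

End FermatQuotient.

Lemma exists_separating_log p (c : int) : prime p -> c != 0%R ->
  exists N phi, [/\ 0 < N, log_mod p N phi & separates_shift p N c phi].
Proof.
move=> p_pr c0; have [pc|pNc] := boolP (p%:Z %| c)%Z; last first.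
  have [phi [log_phi sep_phi]] := discrete_log_separates p_pr pNc.
  by exists p.-1, phi; split; rewrite // -ltnS prednK ?prime_gt1 ?prime_gt0.
have [c' pNc' Dc] := int_pfactor_coprime p_pr c0.
set e := logn p `|c| in Dc.
have e_gt0 : 0 < e.
  by rewrite -(pfactor_dvdn 1 p_pr) ?absz_gt0 // expn1 -(absz_nat p) -dvdzE.
exists (p ^ e), (fermat_quotient p e); split.
- by rewrite expn_gt0 prime_gt0.
- exact: fermat_quotientM.
- move=> x y px py Dxy; apply: (fermat_quotient_shift p_pr e_gt0 px py pNc').
  by rewrite -Dc -Dxy addrC subrK.
Qed.

Section RootsOfUnity.
Local Open Scope ring_scope.
Local Open Scope complex_scope.

Lemma prim_root_exists (C : numClosedFieldType) n : (0 < n)%N ->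
  exists z : C, n.-primitive_root z.
Proof.
move=> n_gt0; pose P : {poly C} := 'X^n - 1.
have [r DP] := closed_field_poly_normal P.
rewrite (monicP _) ?monicXnsubC // scale1r in DP.
have r_unity : all n.-unity_root r by apply/allP=> z; rewrite -root_prod_XsubC -DP.
have size_r : (n < (size r).+1)%N by rewrite -(size_prod_XsubC r id) -DP size_XnsubC.
have [|z _ ?] := hasP (has_prim_root n_gt0 r_unity _ size_r); last by exists z.
by rewrite -separable_prod_XsubC -DP separable_Xn_sub_1 // pnatr_eq0 -lt0n.
Qed.

Lemma norm_prim_root (C : numDomainType) n (w : C) :
  n.-primitive_root w -> `|w| = 1.
Proof.
move=> w_prim; apply/eqP; rewrite -(pexpr_eq1 (prim_order_gt0 w_prim)) //.
by rewrite -normrX prim_expr_order // normr1.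
Qed.

Variable R : rcfType.
Implicit Types (w z : R[i]).

Lemma normC_normc z : `|z| = (Normc.normc z)%:C.
Proof. by case: z. Qed.

Lemma normc_prim_rootX n w i : n.-primitive_root w -> Normc.normc (w ^+ i) = 1.
Proof.
move=> w_prim; apply: (@complexI R).
by rewrite -normC_normc normrX (norm_prim_root w_prim) expr1n.
Qed.

Lemma prim_root_sep n w : n.-primitive_root w ->
  exists2 δ : R, 0 < δ & forall i j, (i != j %[mod n])%N ->
    δ <= Normc.normc (w ^+ i - w ^+ j).
Proof.
move=> w_prim; have n_gt0 := prim_order_gt0 w_prim.
pose δ := \big[Num.min/1]_(m < n | (0 < m)%N) Normc.normc (w ^+ m - 1).
exists δ.
  apply/bigmin_gtP; split=> // m m_gt0.
  rewrite -ltcR -normC_normc normr_gt0 subr_eq0 -(prim_order_dvd w_prim).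
  by apply/negP => /(dvdn_leq m_gt0); rewrite leqNgt ltn_ord.
suff sep s t : (s < t < n)%N -> δ <= Normc.normc (w ^+ s - w ^+ t).
  move=> i j; rewrite -(prim_expr_mod w_prim i) -(prim_expr_mod w_prim j).
  have [lt_ij|lt_ji|->] := ltngtP (i %% n) (j %% n); rewrite ?eqxx // => _.
    by apply: sep; rewrite lt_ij ltn_pmod.
  by rewrite -normcN opprB; apply: sep; rewrite lt_ji ltn_pmod.
case/andP=> lt_st lt_tn.
have -> : w ^+ s - w ^+ t = - (w ^+ s * (w ^+ (t - s) - 1)).
  by rewrite mulrBr mulr1 -exprD subnKC 1?ltnW // opprB.
rewrite normcN Normc.normcM (normc_prim_rootX _ w_prim) mul1r.
have lt_tsn : (t - s < n)%N by rewrite (leq_ltn_trans (leq_subr _ _)).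
by apply: (@bigmin_le_cond _ _ _ _ (Ordinal lt_tsn)); rewrite /= subn_gt0.
Qed.

End RootsOfUnity.

Lemma limn_einf_gt0 (R : realType) (u : nat -> R) (δ : R) n0 : (0 < δ)%R ->
  (forall n, n0 <= n -> (δ <= u n)%R) -> (0 < limn_einf (fun n => (u n)%:E))%E.
Proof.
move=> δ_gt0 u_ge; rewrite limn_einf_lim.
have -> : limn (einfs (fun n => (u n)%:E)) =
          ereal_sup (range (einfs (fun n => (u n)%:E))).
  by apply/cvg_lim => //; exact: cvg_einfs_sup.
apply: (@lt_le_trans _ _ δ%:E); first by rewrite lte_fin.
apply: (@le_trans _ _ (einfs (fun n => (u n)%:E) n0)); last first.
  by apply: ereal_sup_ubound; exists n0.
by apply: le_ereal_inf_tmp => _ [k /= k_ge <-]; rewrite lee_fin u_ge.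
Qed.

Lemma unimodular_cm_log (R : realType) p N phi (w : R[i]) : prime p ->
  (N.-primitive_root w)%R -> log_mod p N phi ->
  unimodular_cm (fun m => w ^+ phi (m`_p^')%N)%R.
Proof.
move=> p_pr w_prim log_phi; split=> [n _ | m n m_gt0 n_gt0].
  exact: normc_prim_rootX w_prim.
rewrite partnM // -exprD -(prim_expr_mod w_prim) -[RHS](prim_expr_mod w_prim).
by rewrite log_phi ?coprime_partn_p'.
Qed.

Lemma partn_p'_affine p k (A n : nat) (B : int) : prime p -> 0 < A -> p %| A ->
  ~~ (p %| `|B|) -> `|B| < n -> exists x : nat, [/\ coprime p x,
    (x%:Z = A%:Z * n%:Z + B)%R &
    (`|((A * p ^ k)%:Z * n%:Z + B * (p ^ k)%:Z)%R|)`_p^' = x].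
Proof.
move=> p_pr A_gt0 pA pNB B_lt_n.
have lin_gt0 : (0 < A%:Z * n%:Z + B)%R.
  by case: (lerP 0 B) => [/gez0_abs|/ltz0_abs] absB; nia.
have pNlin : ~~ (p %| `|(A%:Z * n%:Z + B)%R|).
  by rewrite -(absz_nat p) -dvdzE rpredDl ?dvdzE ?absz_nat ?dvdn_mulr.
exists `|(A%:Z * n%:Z + B)%R|; split.
- by rewrite prime_coprime.
- by rewrite gtz0_abs.
- have -> : ((A * p ^ k)%:Z * n%:Z + B * (p ^ k)%:Z =
            (A%:Z * n%:Z + B) * (p ^ k)%:Z)%R by rewrite PoszM; ring.
  by rewrite abszM absz_nat partn_p'X ?prime_coprime.
Qed.

Theorem lemma4p2 (R : realType) (a : nat) (b d : int) (p : nat) :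
  (0 < a)%N -> b != 0%R -> d != 0%R -> b != d -> prime p ->
  logn p `|b| = logn p `|d| ->
  (maxn (logn p `|b|) (logn p `|d|) < logn p a)%N ->
  exists f : nat -> R[i], unimodular_cm f /\
    (0 < limn_einf (fun n : nat =>
      (Normc.normc (fZ f (a%:Z * n%:Z + b)%R - fZ f (a%:Z * n%:Z + d)%R))%:E))%E.
Proof.
move=> a_gt0 b0 d0 neq_bd p_pr eq_val lt_val.
have [B pNB Db] := int_pfactor_coprime p_pr b0.
have [D pND Dd] := int_pfactor_coprime p_pr d0.
rewrite -eq_val in Dd; rewrite -eq_val maxnn in lt_val.
set k := logn p `|b| in Db Dd lt_val.
have pk1_a : p ^ k.+1 %| a by rewrite pfactor_dvdn.
have pk_a : p ^ k %| a := dvdn_trans (dvdn_exp2l p (leqnSn k)) pk1_a.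
have [A pA Da] : exists2 A, p %| A & a = A * p ^ k.
  by exists (a %/ p ^ k); rewrite ?divnK // dvdn_divRL // -expnS.
have A_gt0 : 0 < A by move: a_gt0; rewrite Da muln_gt0 => /andP[].
have c0 : (D - B != 0)%R by apply: contra neq_bd; rewrite subr_eq0 Db Dd => /eqP->.
have [N [phi [N_gt0 log_phi sep_phi]]] := exists_separating_log p_pr c0.
have [w w_prim] := prim_root_exists R[i] N_gt0.
exists (fun m => w ^+ phi (m`_p^')%N)%R; split.
  exact: unimodular_cm_log p_pr w_prim log_phi.
have [δ δ_gt0 δ_le] := prim_root_sep w_prim.
apply: (@limn_einf_gt0 _ _ _ (`|B| + `|D|).+1 δ_gt0) => n n_ge.
have B_lt_n : `|B| < n by apply: leq_trans n_ge; rewrite ltnS leq_addr.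
have D_lt_n : `|D| < n by apply: leq_trans n_ge; rewrite ltnS leq_addl.
have [x [px Dx Ex]] := partn_p'_affine k p_pr A_gt0 pA pNB B_lt_n.
have [y [py Dy Ey]] := partn_p'_affine k p_pr A_gt0 pA pND D_lt_n.
rewrite /fZ Da Db Dd Ex Ey; apply/δ_le/sep_phi => //.
by rewrite Dx Dy; ring.
Qed.
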